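(* The maximum of $\operatorname{rk}_\perp(A)$ over all real tensors $A\in\mathbb{R}^3\otimes\mathbb{R}^3\otimes\mathbb{R}^3$ equals $7$.
   Context: An $(n_1,\dots,n_d)$-tensor is an $n_1\times\cdots\times n_d$ real array. The Frobenius inner product is $\langle A,A'\rangle_F=\sum a_{i_1\dots i_d}a'_{i_1\dots i_d}$. A rank-one tensor is a nonzero outer product $x^{(1)}\otimes\cdots\otimes x^{(d)}$, whose entries are $x^{(1)}_{i_1}\cdots x^{(d)}_{i_d}$. The orthogonal rank $\operatorname{rk}_\perp(A)$ of a tensor $A$ is the smallest $r$ such that $A=Y_1+\dots+Y_r$ with rank-one tensors $Y_\ell$ satisfying $\langle Y_\ell,Y_{\ell'}\rangle_F=0$ for all $\ell\neq\ell'$. The zero tensor has orthogonal rank $0$. *)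

From Stdlib Require Import Reals List Arith.
Open Scope R_scope.

(* An (n1,n2,n3)-tensor is represented by a function on index triples;
   only entries with i < n1, j < n2, k < n3 are meaningful. *)
Definition tensor3 := nat -> nat -> nat -> R.

Fixpoint rsum (n : nat) (f : nat -> R) : R :=
  match n with
  | O => 0
  | S m => rsum m f + f m
  end.

Definition teq (n1 n2 n3 : nat) (A B : tensor3) : Prop :=
  forall i j k, (i < n1)%nat -> (j < n2)%nat -> (k < n3)%nat -> A i j k = B i j k.

Definition frob (n1 n2 n3 : nat) (A B : tensor3) : R :=
  rsum n1 (fun i => rsum n2 (fun j => rsum n3 (fun k => A i j k * B i j k))).

Definition tzero : tensor3 := fun _ _ _ => 0.
Definition tadd (A B : tensor3) : tensor3 := fun i j k => A i j k + B i j k.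
Definition tsum (Ys : list tensor3) : tensor3 := fold_right tadd tzero Ys.

Definition rank_one (n1 n2 n3 : nat) (Y : tensor3) : Prop :=
  (exists x y z : nat -> R, teq n1 n2 n3 Y (fun i j k => x i * y j * z k)) /\
  (exists i j k, (i < n1)%nat /\ (j < n2)%nat /\ (k < n3)%nat /\ Y i j k <> 0).

Definition orth_decomp (n1 n2 n3 : nat) (A : tensor3) (r : nat) : Prop :=
  exists Ys : list tensor3,
    length Ys = r /\
    Forall (rank_one n1 n2 n3) Ys /\
    (forall a b, (a < r)%nat -> (b < r)%nat -> a <> b ->
       frob n1 n2 n3 (nth a Ys tzero) (nth b Ys tzero) = 0) /\
    teq n1 n2 n3 A (tsum Ys).

Definition is_orth_rank (n1 n2 n3 : nat) (A : tensor3) (r : nat) : Prop :=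
  orth_decomp n1 n2 n3 A r /\
  (forall r', orth_decomp n1 n2 n3 A r' -> (r <= r')%nat).

From Stdlib Require Import Reals List Wf_nat Lra Lia Psatz Classical.
Import ListNotations.
Open Scope R_scope.

(* Lower bound: in an orthogonal decomposition A = Y_1 + ... + Y_r every term satisfies
   <A, Y_l> = |Y_l|^2.  Hence if <A, x(x)y(x)z>^2 <= c |x(x)y(x)z|^2 for all rank-one tensors,
   each |Y_l|^2 <= c and |A|^2 = sum |Y_l|^2 <= c r.  For the tensor Aex below,
   |Aex|^2 = 111, and c = 18 works: contracting Aex with x and y gives a vector of squared
   norm at most 18 |x|^2 |y|^2 (an explicit sum of squares), then Cauchy-Schwarz in z.
   As 111 > 6 * 18, r >= 7.

   Upper bound: z |-> det (A z) of the third-mode slice is a real cubic form, so it vanishes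
   at some z3 <> 0 and, restricted to the plane orthogonal to z3, at some z2 <> 0.  Expanding
   A along the orthogonal frame (z2 x z3, z2, z3), the first slice is the sum of its three
   rows and each singular slice is a sum of two rank-one matrices with orthogonal left
   factors.  Orthogonality of the frame makes all seven resulting terms pairwise
   orthogonal; zero terms are then dropped. *)


(** * Frobenius inner product and orthogonal decompositions *)

Lemma rsum_ext n f g : (forall i, (i < n)%nat -> f i = g i) -> rsum n f = rsum n g.
Proof.
  induction n as [|n IH]; intros H; simpl; [reflexivity|].
  rewrite (H n) by lia. rewrite IH; [reflexivity|]. intros; apply H; lia.
Qed.

Lemma rsum_plus n f g : rsum n (fun i => f i + g i) = rsum n f + rsum n g.
Proof. induction n as [|n IH]; simpl; [ring|]. rewrite IH; ring. Qed.

Lemma rsum_eq0 n f : (forall i, (i < n)%nat -> f i = 0) -> rsum n f = 0.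
Proof.
  intros H. transitivity (rsum n (fun _ => 0)); [now apply rsum_ext|].
  induction n as [|n IH]; simpl; [reflexivity|]. rewrite IH; [ring|]. intros; apply H; lia.
Qed.

Lemma rsum_ge0 n f : (forall i, (i < n)%nat -> 0 <= f i) -> 0 <= rsum n f.
Proof.
  induction n as [|n IH]; intros H; simpl; [lra|].
  assert (0 <= f n) by (apply H; lia).
  assert (0 <= rsum n f) by (apply IH; intros; apply H; lia). lra.
Qed.

Lemma rsum_ge_term n f m : (forall i, (i < n)%nat -> 0 <= f i) -> (m < n)%nat -> f m <= rsum n f.
Proof.
  induction n as [|n IH]; intros H Hm; [lia|]. simpl.
  assert (0 <= f n) by (apply H; lia).
  destruct (Nat.eq_dec m n) as [->|Hne].
  - assert (0 <= rsum n f) by (apply rsum_ge0; intros; apply H; lia). lra.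
  - assert (f m <= rsum n f) by (apply IH; [intros; apply H|]; lia). lra.
Qed.

Lemma teq_refl n1 n2 n3 A : teq n1 n2 n3 A A.
Proof. intros i j k _ _ _. reflexivity. Qed.

Lemma teq_trans n1 n2 n3 A B C :
  teq n1 n2 n3 A B -> teq n1 n2 n3 B C -> teq n1 n2 n3 A C.
Proof. intros HAB HBC i j k Hi Hj Hk. rewrite HAB, HBC; auto. Qed.

Lemma nth_ForallOrdPairs {T} (P : T -> T -> Prop) (d : T) l :
  (forall a b, (a < length l)%nat -> (b < length l)%nat -> a <> b -> P (nth a l d) (nth b l d)) ->
  ForallOrdPairs P l.
Proof.
  induction l as [|x l IH]; intros H; constructor.
  - apply Forall_forall. intros y Hy. destruct (In_nth l y d Hy) as (b & Hb & <-).
    apply (H 0%nat (S b)); simpl; lia.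
  - apply IH. intros a b Ha Hb Hab. apply (H (S a) (S b)); simpl; lia.
Qed.

Lemma ForallOrdPairs_nth {T} (P : T -> T -> Prop) (d : T) l :
  (forall x y, P x y -> P y x) -> ForallOrdPairs P l ->
  forall a b, (a < length l)%nat -> (b < length l)%nat -> a <> b -> P (nth a l d) (nth b l d).
Proof.
  intros Psym. induction 1 as [|x l Hx Hl IH]; intros a b Ha Hb Hab; simpl in *; [lia|].
  rewrite Forall_forall in Hx.
  destruct a as [|a], b as [|b]; try lia.
  - apply Hx, nth_In. lia.
  - apply Psym, Hx, nth_In. lia.
  - apply IH; lia.
Qed.

Definition out (x y z : nat -> R) : tensor3 := fun i j k => x i * y j * z k.

Section Frobenius.

Variables n1 n2 n3 : nat.

Lemma frob_comm A B : frob n1 n2 n3 A B = frob n1 n2 n3 B A.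
Proof.
  unfold frob. apply rsum_ext; intros i _. apply rsum_ext; intros j _.
  apply rsum_ext; intros k _. ring.
Qed.

Lemma frob_addl A B C : frob n1 n2 n3 (tadd A B) C = frob n1 n2 n3 A C + frob n1 n2 n3 B C.
Proof.
  unfold frob, tadd. rewrite <- rsum_plus. apply rsum_ext; intros i _.
  rewrite <- rsum_plus. apply rsum_ext; intros j _.
  rewrite <- rsum_plus. apply rsum_ext; intros k _. ring.
Qed.

Lemma frob_addr A B C : frob n1 n2 n3 A (tadd B C) = frob n1 n2 n3 A B + frob n1 n2 n3 A C.
Proof. rewrite frob_comm, frob_addl, (frob_comm B), (frob_comm C). reflexivity. Qed.

Lemma frob_0l C : frob n1 n2 n3 tzero C = 0.
Proof.
  unfold frob, tzero. apply rsum_eq0; intros i _. apply rsum_eq0; intros j _.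
  apply rsum_eq0; intros k _. ring.
Qed.

Lemma frob_teq A A' B B' :
  teq n1 n2 n3 A A' -> teq n1 n2 n3 B B' -> frob n1 n2 n3 A B = frob n1 n2 n3 A' B'.
Proof.
  intros HA HB. unfold frob. apply rsum_ext; intros i Hi. apply rsum_ext; intros j Hj.
  apply rsum_ext; intros k Hk. rewrite HA, HB; auto.
Qed.

Lemma frob_self_gt0 Y i j k : (i < n1)%nat -> (j < n2)%nat -> (k < n3)%nat ->
  Y i j k <> 0 -> 0 < frob n1 n2 n3 Y Y.
Proof.
  intros Hi Hj Hk HY.
  assert (Hsq : 0 < Y i j k * Y i j k) by nra.
  enough (Y i j k * Y i j k <= frob n1 n2 n3 Y Y) by lra.
  unfold frob.
  eapply Rle_trans; [|apply (rsum_ge_term _ _ i); auto;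
    intros; apply rsum_ge0; intros; apply rsum_ge0; intros; nra].
  eapply Rle_trans; [|apply (rsum_ge_term _ _ j); auto; intros; apply rsum_ge0; intros; nra].
  apply (rsum_ge_term _ (fun k => Y i j k * Y i j k)); auto. intros; nra.
Qed.

Definition frob_orth (Y Z : tensor3) : Prop := frob n1 n2 n3 Y Z = 0.

Lemma frob_tsum_orth Y l : Forall (frob_orth Y) l -> frob n1 n2 n3 Y (tsum l) = 0.
Proof.
  induction 1 as [|Z l HZ _ IH]; simpl.
  - rewrite frob_comm. apply frob_0l.
  - rewrite frob_addr, IH. unfold frob_orth in HZ. rewrite HZ. ring.
Qed.

Lemma frob_tsum_In l Y : ForallOrdPairs frob_orth l -> In Y l ->
  frob n1 n2 n3 (tsum l) Y = frob n1 n2 n3 Y Y.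
Proof.
  induction 1 as [|Z l HZ Hl IH]; intros HY; [destruct HY|]. simpl. rewrite frob_addl.
  destruct HY as [<-|HY].
  - rewrite (frob_comm (tsum l)), frob_tsum_orth by assumption. ring.
  - rewrite IH by assumption. rewrite Forall_forall in HZ. rewrite HZ by assumption. ring.
Qed.

Lemma frob_tsum_le l c : ForallOrdPairs frob_orth l ->
  Forall (fun Y => frob n1 n2 n3 Y Y <= c) l ->
  frob n1 n2 n3 (tsum l) (tsum l) <= c * INR (length l).
Proof.
  induction 1 as [|Y l HY Hl IH]; intros Hc.
  - simpl. rewrite frob_0l. lra.
  - change (tsum (Y :: l)) with (tadd Y (tsum l)).
    change (length (Y :: l)) with (S (length l)).
    inversion Hc as [|? ? HYc Hlc]; subst.
    rewrite frob_addl, !frob_addr, (frob_comm (tsum l)), frob_tsum_orth, S_INR by assumption.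
    specialize (IH Hlc). lra.
Qed.

Definition spectral_bound (A : tensor3) (c : R) : Prop :=
  forall x y z, (frob n1 n2 n3 A (out x y z)) ^ 2 <= c * frob n1 n2 n3 (out x y z) (out x y z).

Lemma orth_decomp_frob_le A c r :
  spectral_bound A c -> orth_decomp n1 n2 n3 A r -> frob n1 n2 n3 A A <= c * INR r.
Proof.
  intros Hc (Ys & <- & Hrk & Hnth & HA).
  assert (Hpw : ForallOrdPairs frob_orth Ys) by (now apply (nth_ForallOrdPairs _ tzero)).
  rewrite (frob_teq _ _ _ _ HA HA). apply frob_tsum_le; [assumption|].
  rewrite Forall_forall in *. intros Y HY.
  destruct (Hrk Y HY) as [(x & y & z & Hxyz) (i & j & k & Hi & Hj & Hk & Hnz)].
  assert (Hpos := frob_self_gt0 Y i j k Hi Hj Hk Hnz).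
  assert (HAY : frob n1 n2 n3 A Y = frob n1 n2 n3 Y Y).
  { rewrite (frob_teq _ _ _ _ HA (teq_refl _ _ _ Y)). now apply frob_tsum_In. }
  change (teq n1 n2 n3 Y (out x y z)) in Hxyz. specialize (Hc x y z).
  rewrite <- (frob_teq _ _ _ _ (teq_refl _ _ _ A) Hxyz), <- (frob_teq _ _ _ _ Hxyz Hxyz),
    HAY in Hc.
  (* |Y|^4 = <A, Y>^2 <= c |Y|^2 with |Y|^2 > 0 *)
  nra.
Qed.

Definition outer (Y : tensor3) : Prop := exists x y z, teq n1 n2 n3 Y (out x y z).

Lemma drop_zero_terms Ys : Forall outer Ys -> ForallOrdPairs frob_orth Ys ->
  exists Zs, (length Zs <= length Ys)%nat /\ incl Zs Ys /\ Forall (rank_one n1 n2 n3) Zs /\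
    ForallOrdPairs frob_orth Zs /\ teq n1 n2 n3 (tsum Ys) (tsum Zs).
Proof.
  induction Ys as [|Y Ys IH]; intros Ho Hp.
  - exists []. repeat split; auto using incl_refl, teq_refl.
  - inversion Ho as [|? ? HY Ho']; inversion Hp as [|? ? HYorth Hp']; subst.
    destruct (IH Ho' Hp') as (Zs & Hlen & Hincl & Hrk & Horth & Hsum).
    destruct (classic (exists i j k,
      (i < n1)%nat /\ (j < n2)%nat /\ (k < n3)%nat /\ Y i j k <> 0)) as [Hnz|Hz].
    + exists (Y :: Zs). repeat split.
      * simpl. lia.
      * apply incl_cons; [now left|]. now apply incl_tl.
      * constructor; [exact (conj HY Hnz)|assumption].
      * constructor; [exact (incl_Forall Hincl HYorth)|assumption].
      * intros i j k Hi Hj Hk. simpl. unfold tadd. rewrite Hsum; auto.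
    + exists Zs. repeat split; [simpl; lia|now apply incl_tl|assumption..|].
      intros i j k Hi Hj Hk. simpl. unfold tadd. rewrite <- Hsum by assumption.
      destruct (Req_dec (Y i j k) 0) as [->|HYnz]; [ring|].
      exfalso. apply Hz. now exists i, j, k.
Qed.

Lemma orth_decomp_of_outer A Ys : Forall outer Ys -> ForallOrdPairs frob_orth Ys ->
  teq n1 n2 n3 A (tsum Ys) -> exists r, orth_decomp n1 n2 n3 A r /\ (r <= length Ys)%nat.
Proof.
  intros Ho Hp HA.
  destruct (drop_zero_terms Ys Ho Hp) as (Zs & Hlen & _ & Hrk & Hpz & Hsum).
  exists (length Zs). split; [|assumption].
  exists Zs. split; [reflexivity|]. split; [assumption|].
  split; [|eapply teq_trans; eassumption].
  apply (ForallOrdPairs_nth frob_orth tzero); [|assumption].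
  intros Y Z. unfold frob_orth. now rewrite frob_comm.
Qed.

Lemma orth_rank_exists A r : orth_decomp n1 n2 n3 A r ->
  exists m, is_orth_rank n1 n2 n3 A m /\ (m <= r)%nat.
Proof.
  intros Hr.
  destruct (dec_inh_nat_subset_has_unique_least_element (orth_decomp n1 n2 n3 A)
              (fun m => classic _) (ex_intro _ r Hr)) as (m & (Hm & Hleast) & _).
  exists m. split; [split; assumption|]. now apply Hleast.
Qed.

End Frobenius.

(** * The lower bound *)

Definition vec := nat -> R.

Definition dot (u v : vec) : R := u 0%nat * v 0%nat + u 1%nat * v 1%nat + u 2%nat * v 2%nat.

Definition cross (u v : vec) : vec := fun i =>
  match i with
  | 0 => u 1%nat * v 2%nat - u 2%nat * v 1%nat
  | 1 => u 2%nat * v 0%nat - u 0%nat * v 2%nat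
  | _ => u 0%nat * v 1%nat - u 1%nat * v 0%nat
  end.

Definition std_basis (k : nat) : vec := fun i => if Nat.eqb i k then 1 else 0.

Lemma dot_comm u v : dot u v = dot v u.
Proof. unfold dot. ring. Qed.

Lemma dot_self_ge0 u : 0 <= dot u u.
Proof. unfold dot. nra. Qed.

Lemma dot_self_eq0 u : dot u u = 0 -> u 0%nat = 0 /\ u 1%nat = 0 /\ u 2%nat = 0.
Proof. unfold dot. intros. repeat split; nra. Qed.

Lemma dot_cross_l u v : dot (cross u v) u = 0.
Proof. unfold dot, cross. simpl. ring. Qed.

Lemma dot_cross_r u v : dot (cross u v) v = 0.
Proof. unfold dot, cross. simpl. ring. Qed.

Lemma cross_norm u v : dot (cross u v) (cross u v) = dot u u * dot v v - (dot u v) ^ 2.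
Proof. unfold dot, cross. simpl. ring. Qed.

Lemma dot_cross_cycle a b c : dot (cross a b) c = dot (cross b c) a.
Proof. unfold dot, cross. simpl. ring. Qed.

Lemma cross_norm_swap a b : dot (cross a b) (cross a b) = dot (cross b a) (cross b a).
Proof. unfold dot, cross. simpl. ring. Qed.

Lemma cauchy_schwarz u v : (dot u v) ^ 2 <= dot u u * dot v v.
Proof. pose proof (dot_self_ge0 (cross u v)). rewrite cross_norm in *. lra. Qed.

Lemma frob_out x y z x' y' z' :
  frob 3 3 3 (out x y z) (out x' y' z') = dot x x' * dot y y' * dot z z'.
Proof. unfold frob, out, dot. simpl. ring. Qed.

Definition contract12 (A : tensor3) (x y : vec) : vec :=
  fun k => rsum 3 (fun i => rsum 3 (fun j => A i j k * x i * y j)).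

Lemma frob_out_contract12 A x y z : frob 3 3 3 A (out x y z) = dot (contract12 A x y) z.
Proof. unfold frob, out, dot, contract12. simpl. ring. Qed.

Definition kronecker (a b : nat) : R := if Nat.eqb a b then 1 else 0.

Definition levi_civita (i j k : nat) : R :=
  match i, j, k with
  | 0, 1, 2 | 1, 2, 0 | 2, 0, 1 => 1
  | 0, 2, 1 | 2, 1, 0 | 1, 0, 2 => -1
  | _, _, _ => 0
  end.

Definition Aex : tensor3 := fun i j k =>
  4 * levi_civita i j k + kronecker i j * kronecker k 0 + kronecker i k * kronecker j 0
  + kronecker j k * kronecker i 0.

Lemma frob_Aex : frob 3 3 3 Aex Aex = 111.
Proof. unfold frob, Aex, kronecker, levi_civita. simpl. ring. Qed.

Lemma Aex_contract12_sos x y :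
  18 * (dot x x * dot y y) - dot (contract12 Aex x y) (contract12 Aex x y) =
    (3 * x 0%nat * y 0%nat + 4 * x 1%nat * y 1%nat - x 1%nat * y 2%nat + x 2%nat * y 1%nat
       + 4 * x 2%nat * y 2%nat) ^ 2
  + (x 0%nat * y 1%nat + x 2%nat * y 0%nat) ^ 2 + (x 0%nat * y 2%nat - x 1%nat * y 0%nat) ^ 2
  + (x 1%nat * y 1%nat + x 2%nat * y 2%nat) ^ 2 + (x 1%nat * y 2%nat - x 2%nat * y 1%nat) ^ 2.
Proof. unfold dot, contract12, Aex, kronecker, levi_civita. simpl. ring. Qed.

Lemma Aex_contract12_le x y :
  dot (contract12 Aex x y) (contract12 Aex x y) <= 18 * (dot x x * dot y y).
Proof.
  pose proof (Aex_contract12_sos x y) as Hsos.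
  match type of Hsos with _ = ?a ^ 2 + ?b ^ 2 + ?c ^ 2 + ?d ^ 2 + ?e ^ 2 =>
    pose proof (pow2_ge_0 a); pose proof (pow2_ge_0 b); pose proof (pow2_ge_0 c);
    pose proof (pow2_ge_0 d); pose proof (pow2_ge_0 e) end.
  lra.
Qed.

Lemma Aex_spectral_bound : spectral_bound 3 3 3 Aex 18.
Proof.
  intros x y z. rewrite frob_out, frob_out_contract12.
  pose proof (cauchy_schwarz (contract12 Aex x y) z).
  pose proof (Aex_contract12_le x y). pose proof (dot_self_ge0 z). nra.
Qed.

Lemma Aex_orth_decomp_ge_7 r : orth_decomp 3 3 3 Aex r -> (7 <= r)%nat.
Proof.
  intros Hr. pose proof (orth_decomp_frob_le 3 3 3 Aex 18 r Aex_spectral_bound Hr) as Hle.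
  rewrite frob_Aex in Hle.
  apply Nat.nlt_ge. intros Hlt.
  assert (Hr6 : INR r <= 6) by (replace 6 with (INR 6) by (simpl; ring); apply le_INR; lia).
  lra.
Qed.

(** * The upper bound *)

Lemma cross_nonzero u v : dot u v = 0 -> dot u u <> 0 -> dot v v <> 0 ->
  dot (cross u v) (cross u v) <> 0.
Proof.
  intros Huv Hu Hv. rewrite cross_norm, Huv.
  replace (dot u u * dot v v - 0 ^ 2) with (dot u u * dot v v) by ring.
  now apply Rmult_integral_contrapositive.
Qed.

Lemma orth_basis_expansion u v : dot u v = 0 -> dot u u <> 0 -> dot v v <> 0 ->
  forall (f : vec) i, (i < 3)%nat ->
  f i = u i * dot u f / dot u u + v i * dot v f / dot v v
        + cross u v i * dot (cross u v) f / dot (cross u v) (cross u v).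
Proof.
  intros Huv Hu Hv f i Hi.
  rewrite cross_norm, Huv.
  replace (dot u u * dot v v - 0 ^ 2) with (dot u u * dot v v) by ring.
  assert (E : u i * dot u f * dot v v + v i * dot v f * dot u u + cross u v i * dot (cross u v) f
     = dot u u * dot v v * f i + dot u v * (u i * dot v f + v i * dot u f - dot u v * f i)).
  { destruct i as [|[|[|i]]]; try lia; unfold dot, cross; simpl; ring. }
  rewrite Huv in E.
  replace (u i * dot u f / dot u u + v i * dot v f / dot v v
           + cross u v i * dot (cross u v) f / (dot u u * dot v v))
    with ((u i * dot u f * dot v v + v i * dot v f * dot u u + cross u v i * dot (cross u v) f)
          / (dot u u * dot v v)) by (field; auto).
  rewrite E. field. auto.
Qed.

Definition col (M : nat -> nat -> R) (j : nat) : vec := fun i => M i j.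

Definition det3 (M : nat -> nat -> R) : R := dot (cross (col M 0) (col M 1)) (col M 2).

Lemma kernel_of_parallel a b c : dot a a <> 0 ->
  dot (cross a b) (cross a b) = 0 -> dot (cross a c) (cross a c) = 0 ->
  exists p, dot p p <> 0 /\ dot p a = 0 /\ dot p b = 0 /\ dot p c = 0.
Proof.
  intros Ha Hb Hc.
  assert (Hperp : forall k w, dot (cross a w) (cross a w) = 0 ->
                    dot (cross a (std_basis k)) w = 0).
  { intros k w Hw. apply dot_self_eq0 in Hw as (h0 & h1 & h2).
    transitivity (- dot (std_basis k) (cross a w)); [unfold dot, cross; simpl; ring|].
    unfold dot. rewrite h0, h1, h2. ring. }
  destruct (classic (exists k, dot (cross a (std_basis k)) (cross a (std_basis k)) <> 0))
    as [[k Hk]|Hno].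
  - exists (cross a (std_basis k)). repeat split; auto using dot_cross_l.
  - exfalso. apply Ha.
    assert (Hz : forall k, dot (cross a (std_basis k)) (cross a (std_basis k)) = 0)
      by (intros k; apply NNPP; eauto).
    assert (Hsum : dot (cross a (std_basis 0)) (cross a (std_basis 0))
                   + dot (cross a (std_basis 1)) (cross a (std_basis 1))
                   + dot (cross a (std_basis 2)) (cross a (std_basis 2)) = 2 * dot a a)
      by (unfold dot, cross, std_basis; simpl; ring).
    rewrite !Hz in Hsum. lra.
Qed.

Lemma det3_zero_left_kernel M : det3 M = 0 ->
  exists p, dot p p <> 0 /\ forall j, (j < 3)%nat -> dot p (col M j) = 0.
Proof.
  (* two independent columns give their cross product; otherwise all columns are parallel *)
  unfold det3. set (c0 := col M 0). set (c1 := col M 1). set (c2 := col M 2). intros Hd.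
  enough (exists p, dot p p <> 0 /\ dot p c0 = 0 /\ dot p c1 = 0 /\ dot p c2 = 0)
    as (p & Hp & h0 & h1 & h2).
  { exists p. split; [assumption|]. intros [|[|[|j]]] Hj; auto. lia. }
  destruct (Req_dec (dot (cross c0 c1) (cross c0 c1)) 0) as [x01|x01].
  2:{ exists (cross c0 c1). repeat split; auto using dot_cross_l, dot_cross_r. }
  destruct (Req_dec (dot (cross c1 c2) (cross c1 c2)) 0) as [x12|x12].
  2:{ exists (cross c1 c2). rewrite <- (dot_cross_cycle c0 c1 c2).
      repeat split; auto using dot_cross_l, dot_cross_r. }
  destruct (Req_dec (dot (cross c2 c0) (cross c2 c0)) 0) as [x20|x20].
  2:{ exists (cross c2 c0). rewrite (dot_cross_cycle c2 c0 c1).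
      repeat split; auto using dot_cross_l, dot_cross_r. }
  destruct (Req_dec (dot c0 c0) 0) as [z0|z0].
  2:{ rewrite cross_norm_swap in x20. apply kernel_of_parallel; assumption. }
  destruct (Req_dec (dot c1 c1) 0) as [z1|z1].
  2:{ rewrite cross_norm_swap in x01.
      destruct (kernel_of_parallel c1 c2 c0) as (p & ?); [assumption..|]. exists p. tauto. }
  destruct (Req_dec (dot c2 c2) 0) as [z2|z2].
  2:{ rewrite cross_norm_swap in x12.
      destruct (kernel_of_parallel c2 c0 c1) as (p & ?); [assumption..|]. exists p. tauto. }
  apply dot_self_eq0 in z0, z1, z2.
  exists (std_basis 0). unfold dot, std_basis. simpl. repeat split; lra.
Qed.

Lemma exists_orth_nonzero p : dot p p <> 0 -> exists q, dot q q <> 0 /\ dot p q = 0.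
Proof.
  intros Hp.
  set (q := fun i => match i with 0 => - p 1%nat | 1 => p 0%nat | _ => 0 end).
  destruct (Req_dec (dot q q) 0) as [Hq|Hq].
  2:{ exists q. split; [assumption|]. unfold dot, q. simpl. ring. }
  exists (fun i => match i with 0 => 0 | 1 => - p 2%nat | _ => p 1%nat end).
  unfold dot, q in *. simpl in *. split; [|ring]. intro H'. apply Hp. nra.
Qed.

Lemma cubic_root_of_pos_lead a b c d : 0 < a -> exists s, a * s ^ 3 + b * s ^ 2 + c * s + d = 0.
Proof.
  intros Ha.
  set (f := fun s => a * s ^ 3 + b * s ^ 2 + c * s + d).
  set (B := Rabs b + Rabs c + Rabs d).
  set (K := 1 + B / a).
  assert (Habs : forall x, - Rabs x <= x <= Rabs x).
  { intros x. pose proof (Rle_abs (- x)). rewrite Rabs_Ropp in *. pose proof (Rle_abs x). lra. }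
  pose proof (Habs b); pose proof (Habs c); pose proof (Habs d).
  assert (HaK : a * K = a + B) by (unfold K; field; lra).
  assert (HB : 0 <= B) by (unfold B; pose proof (Rabs_pos b); pose proof (Rabs_pos c);
                           pose proof (Rabs_pos d); lra).
  assert (HK : 1 <= K) by nra.
  (* K is chosen so that B K^2 = a (K - 1) K^2: the leading term dominates at K and -K *)
  assert (Hdom : Rabs (b * K ^ 2) + Rabs (c * K) + Rabs d <= B * K ^ 2).
  { rewrite !Rabs_mult, <- RPow_abs, (Rabs_pos_eq K) by lra. unfold B.
    assert (Rabs c * K <= Rabs c * K ^ 2) by (apply Rmult_le_compat_l; [apply Rabs_pos|nra]).
    assert (Rabs d * 1 <= Rabs d * K ^ 2) by (apply Rmult_le_compat_l; [apply Rabs_pos|nra]).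
    lra. }
  assert (HfK : 0 < f K).
  { unfold f. pose proof (Habs (b * K ^ 2)); pose proof (Habs (c * K)). nra. }
  assert (HfmK : f (- K) < 0).
  { unfold f. pose proof (Habs (b * K ^ 2)); pose proof (Habs (c * K)). nra. }
  assert (Hcont : continuity f) by (apply derivable_continuous; unfold f; reg).
  destruct (IVT f (- K) K Hcont ltac:(lra) HfmK HfK) as (s & _ & Hs).
  now exists s.
Qed.

Lemma binary_cubic_nontrivial_zero a b c d : exists s t, (s <> 0 \/ t <> 0) /\
  a * s ^ 3 + b * s ^ 2 * t + c * s * t ^ 2 + d * t ^ 3 = 0.
Proof.
  destruct (Rtotal_order a 0) as [Ha|[Ha|Ha]].
  - destruct (cubic_root_of_pos_lead (- a) (- b) (- c) (- d)) as [s Hs]; [lra|].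
    exists s, 1. split; [right; lra|]. lra.
  - exists 1, 0. split; [left; lra|]. subst. ring.
  - destruct (cubic_root_of_pos_lead a b c d Ha) as [s Hs].
    exists s, 1. split; [right; lra|]. lra.
Qed.

Definition slice (A : tensor3) (z : vec) : nat -> nat -> R := fun i j => dot z (fun k => A i j k).

Definition lincomb (s : R) (u : vec) (t : R) (v : vec) : vec := fun i => s * u i + t * v i.

Lemma det3_slice_pencil_zero A u v :
  exists s t, (s <> 0 \/ t <> 0) /\ det3 (slice A (lincomb s u t v)) = 0.
Proof.
  set (f := fun s t => det3 (slice A (lincomb s u t v))).
  (* f is a binary cubic form; its coefficients are recovered by interpolation *)
  set (a := f 1 0). set (d := f 0 1).
  set (b := (f 1 1 - f 1 (-1) - 2 * d) / 2). set (c := (f 1 1 + f 1 (-1) - 2 * a) / 2).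
  assert (Hf : forall s t, f s t = a * s ^ 3 + b * s ^ 2 * t + c * s * t ^ 2 + d * t ^ 3).
  { intros s t. unfold b, c, a, d, f, det3, slice, lincomb, dot, cross, col. simpl. field. }
  destruct (binary_cubic_nontrivial_zero a b c d) as (s & t & Hst & Hzero).
  exists s, t. split; [assumption|]. change (f s t = 0). now rewrite Hf.
Qed.

Lemma singular_slice_frame A : exists z2 z3,
  dot z2 z2 <> 0 /\ dot z3 z3 <> 0 /\ dot z2 z3 = 0 /\
  det3 (slice A z2) = 0 /\ det3 (slice A z3) = 0.
Proof.
  destruct (det3_slice_pencil_zero A (std_basis 0) (std_basis 1)) as (a & b & Hab & H3).
  (* v and std_basis 2 span the plane orthogonal to a e_0 + b e_1 *)
  set (v := fun i => match i with 0 => - b | 1 => a | _ => 0 end).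
  destruct (det3_slice_pencil_zero A v (std_basis 2)) as (s & t & Hst & H2).
  exists (lincomb s v t (std_basis 2)), (lincomb a (std_basis 0) b (std_basis 1)).
  assert (Hab2 : 0 < a * a + b * b) by (destruct Hab; nra).
  repeat split; try assumption; unfold dot, lincomb, std_basis, v; simpl.
  - destruct Hst as [Hs|Ht]; intro H0; [|nra].
    assert (0 < s * s) by nra. nra.
  - nra.
  - ring.
Qed.

Lemma singular_matrix_two_terms M : det3 M = 0 ->
  exists q r y y', dot q r = 0 /\
    forall i j, (i < 3)%nat -> (j < 3)%nat -> M i j = q i * y j + r i * y' j.
Proof.
  intros HM.
  destruct (det3_zero_left_kernel M HM) as (p & Hp & Hker).
  destruct (exists_orth_nonzero p Hp) as (q & Hq & Hpq).
  exists q, (cross p q), (fun j => dot q (col M j) / dot q q),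
    (fun j => dot (cross p q) (col M j) / dot (cross p q) (cross p q)).
  split; [rewrite dot_comm; apply dot_cross_r|].
  intros i j Hi Hj. change (M i j) with (col M j i).
  rewrite (orth_basis_expansion p q Hpq Hp Hq (col M j) i Hi), Hker by assumption.
  field. auto using cross_nonzero.
Qed.

Lemma matrix_row_expansion (M : nat -> nat -> R) i j : (i < 3)%nat ->
  M i j = std_basis 0 i * M 0%nat j + std_basis 1 i * M 1%nat j + std_basis 2 i * M 2%nat j.
Proof. intros Hi. destruct i as [|[|[|i]]]; [..|lia]; unfold std_basis; simpl; ring. Qed.

Lemma slice_frame_expansion A z2 z3 : dot z2 z3 = 0 -> dot z2 z2 <> 0 -> dot z3 z3 <> 0 ->
  forall i j l, (l < 3)%nat ->
  A i j l = slice A (cross z2 z3) i j / dot (cross z2 z3) (cross z2 z3) * cross z2 z3 l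
          + slice A z2 i j / dot z2 z2 * z2 l + slice A z3 i j / dot z3 z3 * z3 l.
Proof.
  intros H23 H2 H3 i j l Hl.
  etransitivity; [apply (orth_basis_expansion z2 z3 H23 H2 H3 (fun k => A i j k) l Hl)|].
  unfold slice. unfold Rdiv. ring.
Qed.

Lemma frob_out_orth x y z x' y' z' : dot x x' = 0 \/ dot z z' = 0 ->
  frob_orth 3 3 3 (out x y z) (out x' y' z').
Proof. unfold frob_orth. rewrite frob_out. intros [-> | ->]; ring. Qed.

Lemma outer_orth_decomp_7 A : exists Ys, length Ys = 7%nat /\ Forall (outer 3 3 3) Ys /\
  ForallOrdPairs (frob_orth 3 3 3) Ys /\ teq 3 3 3 A (tsum Ys).
Proof.
  destruct (singular_slice_frame A) as (z2 & z3 & H2 & H3 & H23 & Hs2 & Hs3).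
  set (z1 := cross z2 z3).
  assert (H12 : dot z1 z2 = 0) by apply dot_cross_l.
  assert (H13 : dot z1 z3 = 0) by apply dot_cross_r.
  destruct (singular_matrix_two_terms _ Hs2) as (q2 & r2 & y2 & y2' & Hqr2 & E2).
  destruct (singular_matrix_two_terms _ Hs3) as (q3 & r3 & y3 & y3' & Hqr3 & E3).
  set (M1 := slice A z1).
  exists [out (std_basis 0) (fun j => M1 0%nat j / dot z1 z1) z1;
          out (std_basis 1) (fun j => M1 1%nat j / dot z1 z1) z1;
          out (std_basis 2) (fun j => M1 2%nat j / dot z1 z1) z1;
          out q2 (fun j => y2 j / dot z2 z2) z2; out r2 (fun j => y2' j / dot z2 z2) z2;
          out q3 (fun j => y3 j / dot z3 z3) z3; out r3 (fun j => y3' j / dot z3 z3) z3].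
  split; [reflexivity|]. split; [|split].
  - repeat constructor; eexists _, _, _; apply teq_refl.
  - repeat apply FOP_cons; repeat apply Forall_cons; try apply Forall_nil; try apply FOP_nil.
    all: apply frob_out_orth; first [right; assumption | left; assumption
                                    | left; unfold dot, std_basis; simpl; ring].
  - intros i j l Hi Hj Hl.
    rewrite (slice_frame_expansion A z2 z3 H23 H2 H3 i j l Hl), (E2 i j Hi Hj), (E3 i j Hi Hj).
    fold z1 M1. rewrite (matrix_row_expansion M1 i j Hi).
    simpl. unfold tadd, tzero, out. unfold Rdiv. ring.
Qed.

Lemma orth_decomp_le_7 A : exists r, orth_decomp 3 3 3 A r /\ (r <= 7)%nat.
Proof.
  destruct (outer_orth_decomp_7 A) as (Ys & Hlen & Ho & Hp & HA).
  rewrite <- Hlen. exact (orth_decomp_of_outer 3 3 3 A Ys Ho Hp HA).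
Qed.

Theorem theorem1p4 :
  (forall A : tensor3, exists r, is_orth_rank 3 3 3 A r /\ (r <= 7)%nat) /\
  (exists A : tensor3, is_orth_rank 3 3 3 A 7).
Proof.
  assert (Hrank : forall A, exists r, is_orth_rank 3 3 3 A r /\ (r <= 7)%nat).
  { intros A. destruct (orth_decomp_le_7 A) as (r & Hr & Hr7).
    destruct (orth_rank_exists 3 3 3 A r Hr) as (m & Hm & Hmr).
    exists m. split; [assumption|lia]. }
  split; [exact Hrank|].
  exists Aex. destruct (Hrank Aex) as (m & Hm & Hm7).
  assert (Hge := Aex_orth_decomp_ge_7 m (proj1 Hm)).
  replace 7%nat with m by lia. exact Hm.
Qed.
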